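(* Let $N$ be a positive integer and let $\lambda=(\lambda_1,\dots,\lambda_t)\in\overline{\mathcal{U}}_N$ with $\lambda_t$ odd. Then for every integer $x$ with $1\le x\le\lambda_t$, $$x\in\lambda\iff \lambda_t-x\notin\lambda.$$
   Context: A partition of $N$ into distinct parts is a sequence $\lambda=(\lambda_1<\dots<\lambda_t)$ of positive integers with sum $N$ and $t\ge 2$, identified with its set of parts. Missing parts: $\mathcal{M}_\lambda=\{1,\dots,\lambda_t\}\setminus\lambda$. $\lambda$ is refinable if there are two distinct missing parts $\mu<\mu'$ with $\mu+\mu'\in\lambda$, unrefinable otherwise; $\mathcal{U}_N$ is the set of unrefinable partitions of $N$. An element of $\mathcal{U}_N$ is maximal if its largest part is the maximum of the largest parts of elements of $\mathcal{U}_N$; $\widetilde{\mathcal{U}}_N$ is the set of these and $\overline{\mathcal{U}}_N=\{\lambda\in\widetilde{\mathcal{U}}_N:\#\mathcal{M}_\lambda=\lfloor\lambda_t/2\rfloor\}$. *)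

From mathcomp Require Import all_boot.
Set Implicit Arguments. Unset Strict Implicit. Unset Printing Implicit Defensive.

Definition is_dpart (N : nat) (l : seq nat) : bool :=
  [&& sorted ltn l, all (fun x => 0 < x) l, sumn l == N & 1 < size l].

Definition lmax (l : seq nat) : nat := last 0 l.

Definition missing (l : seq nat) : seq nat :=
  [seq x <- iota 1 (lmax l) | x \notin l].

Definition refinable (l : seq nat) : bool :=
  has (fun m => has (fun m' => (m < m') && (m + m' \in l)) (missing l)) (missing l).

Definition unrefinable (N : nat) (l : seq nat) : bool :=
  is_dpart N l && ~~ refinable l.

Definition maximal_unref (N : nat) (l : seq nat) : Prop :=
  unrefinable N l /\ forall m, unrefinable N m -> lmax m <= lmax l.

Definition in_Ubar (N : nat) (l : seq nat) : Prop :=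
  maximal_unref N l /\ size (missing l) = (lmax l)./2.

(* Let L = lambda_t be odd. The integers 1, ..., L - 1 split into the
   (L - 1)/2 pairs {y, L - y}, whose two members are distinct and sum to the
   part L. Unrefinability forbids both members of a pair to be missing, so
   each pair contains at most one missing part; having exactly
   floor(L/2) = (L - 1)/2 missing parts, every pair contains exactly one. *)
From mathcomp Require Import all_boot.

Set Implicit Arguments.
Unset Strict Implicit.

Lemma map_reflect_iota n : map (fun y => n.+1 - y) (iota 1 n) = rev (iota 1 n).
Proof.
elim: n => [|n IHn] //.
rewrite [in LHS]/= -(addn1 n) iotaD rev_cat addn1 add1n -IHn.
rewrite -[2]/(1 + 1) iotaDl -map_comp.
by congr (_ :: _); apply: eq_map => y /=; rewrite add1n subSS.
Qed.

Lemma count_reflect_iota n (P : pred nat) :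
  count (fun y => P (n.+1 - y)) (iota 1 n) = count P (iota 1 n).
Proof. by rewrite -(count_map (fun y => n.+1 - y)) map_reflect_iota count_rev. Qed.

(* Each of the n/2 pairs {y, n + 1 - y} contributes at most one to the count. *)
Lemma reflect_cover_of_count_half n (P : pred nat) : ~~ odd n ->
  {in iota 1 n, forall y, P y -> ~~ P (n.+1 - y)} ->
  count P (iota 1 n) = n./2 ->
  {in iota 1 n, forall y, P y || P (n.+1 - y)}.
Proof.
move=> even_n excl countP; set Q := fun y => P (n.+1 - y).
have count_PQ : count (predI P Q) (iota 1 n) = 0.
  apply/eqP; rewrite -leqn0 leqNgt -has_count.
  by apply/hasP => -[y /excl y_excl /andP[Py]]; rewrite /Q (negPf (y_excl Py)).
have := count_predUI P Q (iota 1 n).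
rewrite count_PQ addn0 count_reflect_iota countP addnn even_halfK // => count_PorQ.
by apply/allP; rewrite all_count count_PorQ size_iota.
Qed.

Lemma lmax_mem (l : seq nat) : l != [::] -> lmax l \in l.
Proof. by case: l => [|a s] // _; rewrite /lmax /= mem_last. Qed.

Lemma mem_missing (l : seq nat) y :
  (y \in missing l) = (0 < y <= lmax l) && (y \notin l).
Proof. by rewrite mem_filter mem_iota add1n ltnS andbC. Qed.

Lemma size_missing (l : seq nat) : lmax l \in l ->
  size (missing l) = count [predC l] (iota 1 (lmax l).-1).
Proof.
rewrite /missing size_filter; case: (lmax l) => [|n] // L_in.
by rewrite succnK -(addn1 n) iotaD count_cat /= add1n L_in; apply: addn0.
Qed.

Lemma refinable_of_missing_sum (l : seq nat) y z :
  y \in missing l -> z \in missing l -> y != z -> y + z \in l -> refinable l.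
Proof.
wlog lt_yz : y z / y < z.
  move=> base y_miss z_miss; case: ltngtP => // [y_lt_z | z_lt_y] _ sum_in.
  - by apply: (base y z) => //; rewrite neq_ltn y_lt_z.
  - by apply: (base z y) => //; [rewrite neq_ltn z_lt_y | rewrite addnC].
move=> y_miss z_miss _ yz_in.
by apply/hasP; exists y => //; apply/hasP; exists z => //; rewrite lt_yz.
Qed.

Lemma unrefinable_pair_mem (l : seq nat) y : ~~ refinable l -> odd (lmax l) ->
  lmax l \in l -> 0 < y < lmax l -> (y \in l) || (lmax l - y \in l).
Proof.
move=> unref odd_L L_in /andP[y_gt0 y_lt]; apply: contraR unref.
rewrite negb_or => /andP[y_out Ly_out].
apply: (@refinable_of_missing_sum _ y (lmax l - y)).
- by rewrite mem_missing y_out y_gt0 (ltnW y_lt).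
- by rewrite mem_missing Ly_out subn_gt0 y_lt leq_subr.
- by apply: contraTneq odd_L => Ly; rewrite -(subnK (ltnW y_lt)) -Ly addnn odd_double.
- by rewrite subnKC // ltnW.
Qed.

Lemma mem_reflect_of_half_missing (l : seq nat) y : ~~ refinable l ->
  odd (lmax l) -> lmax l \in l -> size (missing l) = (lmax l)./2 ->
  0 < y < lmax l -> (y \in l) = (lmax l - y \notin l).
Proof.
move=> unref odd_L L_in.
have in_pair y := unrefinable_pair_mem (y := y) unref odd_L L_in.
rewrite size_missing //; move: odd_L in_pair.
case: (lmax l) => [|n] //= even_n in_pair.
rewrite uphalf_half (negPf even_n) => count_out y_range.
have excl : {in iota 1 n, forall z, z \notin l -> ~~ (n.+1 - z \notin l)}.
  by move=> z; rewrite mem_iota add1n negbK => /in_pair /orP[->|].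
have := reflect_cover_of_count_half even_n excl count_out.
move=> /(_ y); rewrite mem_iota add1n => /(_ y_range).
by move: (in_pair _ y_range); case: (y \in l); case: (_ - _ \in l).
Qed.

Theorem lemma4p1 (N : nat) (l : seq nat) :
  0 < N -> in_Ubar N l -> odd (lmax l) ->
  forall x : nat, 1 <= x <= lmax l ->
    (x \in l) <-> (lmax l - x \notin l).
Proof.
move=> _ [[/andP[/and4P[_ pos _ size_l] unref] _] size_miss] odd_L x /andP[x_gt0 x_le].
have L_in : lmax l \in l by apply: lmax_mem; case: (l) size_l.
have [-> | x_neq] := eqVneq x (lmax l).
  by rewrite subnn L_in; split=> // _; apply/negP => /(allP pos).
by rewrite (mem_reflect_of_half_missing unref) // x_gt0 ltn_neqAle x_neq.
Qed.
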